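(* Let $G=(V,E,w)$ be a transitive DAG with nonnegative vertex weights, let $U\subseteq V$ be nonempty and let $d\ge \frac12|U|$. Then there exists a vertex $v\in U_d$ with $r_U(v)=\mathrm{opt}(U)$. In particular $\max_{v\in U_d} r_U(v)=\mathrm{opt}(U)$.
   Context: A DAG $G=(V,E)$ is transitive if $(v_1,v_2),(v_2,v_3)\in E$ implies $(v_1,v_3)\in E$. A chain is a set of vertices any two distinct members of which are joined by an edge; its weight is the sum of the weights of its vertices. For $U\subseteq V$, $\mathrm{opt}(U)$ is the maximum weight of a chain contained in $U$. For $v\in U$, $r_U(v)$ is the maximum weight of a chain contained in $U$ that contains $v$; $U_{-v}=\{u\in U:(u,v)\in E\}$ and $U_{+v}=\{u\in U:(v,u)\in E\}$; and for a real $d$, $U_d=\{v\in U:\max(|U_{-v}|,|U_{+v}|)\le d\}$. *)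

From mathcomp Require Import all_boot all_order all_algebra.
Set Implicit Arguments. Unset Strict Implicit. Unset Printing Implicit Defensive.
Import Order.TTheory GRing.Theory Num.Theory.
Local Open Scope ring_scope.

Section Chains.
Variables (T : finType) (E : rel T) (R : realFieldType) (w : T -> R).

Definition acyclic : Prop := forall x y, E x y -> ~~ connect E y x.
Definition transitive_rel : Prop := forall x y z, E x y -> E y z -> E x z.

Definition is_chain (C : {set T}) : bool :=
  [forall x in C, forall y in C, (x != y) ==> (E x y || E y x)].

Definition weight (C : {set T}) : R := \sum_(x in C) w x.

(* opt(U): max weight of a chain contained in U (empty chain has weight 0;
   with nonnegative weights, the max with 0 is harmless). *)
Definition opt (U : {set T}) : R :=
  \big[Num.max/0]_(C : {set T} | is_chain C && (C \subset U)) weight C.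

Definition rU (U : {set T}) (v : T) : R :=
  \big[Num.max/0]_(C : {set T} | [&& is_chain C, C \subset U & v \in C]) weight C.

Definition Uminus (U : {set T}) (v : T) : {set T} := [set u in U | E u v].
Definition Uplus (U : {set T}) (v : T) : {set T} := [set u in U | E v u].

Definition Ud (U : {set T}) (d : R) : {set T} :=
  [set v in U | (#|Uminus U v|%:R <= d) && (#|Uplus U v|%:R <= d)].
End Chains.

From mathcomp Require Import all_boot all_order all_algebra.
Set Implicit Arguments. Unset Strict Implicit. Unset Printing Implicit Defensive.
Import Order.TTheory GRing.Theory Num.Theory.
Local Open Scope ring_scope.

(* Take a maximum-weight chain C in U that is maximal for inclusion among
   chains in U.  Along C the in-degree m(c) = |U_{-c}| strictly increases and
   vanishes at the bottom of C; let v be the highest element of C with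
   m(v) <= d.  If |U_{+v}| > d, then for the next element c of C we have
   m(c) > d, so U_{+v} and U_{-c} must meet inside U; a common element would
   lie strictly between v and c and could be added to C, contradicting
   maximality.  Hence v is in U_d, and r_U(v) = w(C) = opt(U). *)

Section Chains.
Variables (T : finType) (E : rel T).

Definition saturated (U C : {set T}) : Prop :=
  forall u, u \in U -> {in C, forall c, c != u -> E u c || E c u} -> u \in C.

Lemma is_chainP {C x y} :
  is_chain E C -> x \in C -> y \in C -> x != y -> E x y || E y x.
Proof.
move=> /forallP/(_ x)/implyP hC xC yC.
by move: (hC xC) => /forallP/(_ y)/implyP/(_ yC)/implyP.
Qed.

Lemma is_chain0 : is_chain E set0.
Proof. by apply/forallP => x; rewrite in_set0. Qed.

Lemma is_chain_setU1 C u :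
  is_chain E C -> {in C, forall c, c != u -> E u c || E c u} ->
  is_chain E (u |: C).
Proof.
move=> Cch hu; apply/forallP => x; apply/implyP => xD.
apply/forallP => y; apply/implyP => yD; apply/implyP => xy.
move: xD yD; rewrite !in_setU1 => /predU1P[xu|xC] /predU1P[yu|yC].
- by rewrite xu yu eqxx in xy.
- by rewrite xu; apply: hu; rewrite // eq_sym -xu.
- by rewrite yu orbC; apply: hu; rewrite // -yu.
- exact: is_chainP Cch xC yC xy.
Qed.

Lemma card_lt_setI (A B U : {set T}) :
  A \subset U -> B \subset U -> (#|U| < #|A| + #|B|)%N ->
  exists x, x \in A :&: B.
Proof.
move=> AU BU; rewrite -cardsUI => ltU; apply/set0Pn; rewrite -card_gt0.
have : (#|A :|: B| <= #|U|)%N by apply: subset_leq_card; rewrite subUset AU.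
move: ltU; case: #|_ :&: _|%N => // /[!addn0] ltU /(leq_trans ltU).
by rewrite ltnn.
Qed.

Lemma Uminus_sub U v : Uminus E U v \subset U.
Proof. by apply/subsetP => x; rewrite inE => /andP[]. Qed.

Lemma Uplus_sub U v : Uplus E U v \subset U.
Proof. by apply/subsetP => x; rewrite inE => /andP[]. Qed.

Hypotheses (E_acyclic : acyclic E) (E_trans : transitive_rel E).

Lemma acyclic_irrefl x : ~~ E x x.
Proof. by apply/negP => Exx; move: (E_acyclic Exx); rewrite connect0. Qed.

Variable U : {set T}.
Local Notation m c := #|Uminus E U c|.

Lemma card_Uminus_lt a b : a \in U -> E a b -> (m a < m b)%N.
Proof.
move=> aU Eab; apply: (@leq_trans #|a |: Uminus E U a|).
  by rewrite cardsU1 inE (negbTE (acyclic_irrefl a)) andbF.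
apply: subset_leq_card; apply/subsetP => x; rewrite in_setU1 !inE.
by case/predU1P => [->|/andP[xU Exa]]; rewrite ?aU ?Eab ?xU ?(E_trans Exa Eab).
Qed.

Variable C : {set T}.
Hypotheses (C_chain : is_chain E C) (C_sub : C \subset U).
Hypothesis C_sat : saturated U C.

Lemma saturated_neq0 : U != set0 -> C != set0.
Proof.
case/set0Pn => u uU; apply/negP => /eqP C0.
suff : u \in set0 by rewrite in_set0.
by rewrite -C0; apply: C_sat => // c; rewrite C0 in_set0.
Qed.

Lemma saturated_mem_after {v u} :
  v \in C -> u \in U -> E v u -> {in C, forall c, E v c -> E u c} -> u \in C.
Proof.
move=> vC uU Evu hu; apply: C_sat => // c cC cu.
have [->|cv] := eqVneq c v; first by rewrite Evu orbT.
case/orP: (is_chainP C_chain cC vC cv) => [Ecv|Evc].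
  by rewrite (E_trans Ecv Evu) orbT.
by rewrite hu.
Qed.

Lemma saturated_mem_before {v u} :
  v \in C -> u \in U -> E u v -> {in C, forall c, E c v -> E c u} -> u \in C.
Proof.
move=> vC uU Euv hu; apply: C_sat => // c cC cu.
have [->|cv] := eqVneq c v; first by rewrite Euv.
case/orP: (is_chainP C_chain cC vC cv) => [Ecv|Evc].
  by rewrite hu ?orbT.
by rewrite (E_trans Euv Evc).
Qed.

Lemma saturated_source : U != set0 -> exists2 c, c \in C & Uminus E U c = set0.
Proof.
move=> /saturated_neq0/set0Pn[c0 c0C].
case: (arg_minnP (fun c => m c) c0C) => c cC cmin.
exists c => //; apply/setP => u; rewrite !inE; apply/negP => /andP[uU Euc].
have uC : u \in C.
  apply: (saturated_mem_before cC uU Euc) => c' c'C Ec'c.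
  by have := cmin _ c'C; rewrite leqNgt card_Uminus_lt ?(subsetP C_sub).
by have := cmin _ uC; rewrite leqNgt card_Uminus_lt.
Qed.

(* [c] is chosen as the successor of [v] in [C]: an element of [U] strictly
   between them would be comparable to all of [C]. *)
Lemma saturated_gap {v} :
  v \in C -> Uplus E U v != set0 ->
  exists2 c, c \in C & E v c /\ (#|Uplus E U v| + m c <= #|U|)%N.
Proof.
move=> vC /set0Pn[u0]; rewrite inE => /andP[u0U Evu0].
pose S := [set c in C | E v c].
have [c0 c0S] : exists c0, c0 \in S.
  have [S0|[c0 c0S]] := set_0Vmem S; last by exists c0.
  exists u0; rewrite inE Evu0 andbT.
  apply: (saturated_mem_after vC u0U Evu0) => c cC Evc.
  have : c \in S by rewrite inE cC Evc.
  by rewrite S0 in_set0.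
case: (arg_minnP (fun c => m c) c0S) => c /setIdP[cC Evc] cmin.
exists c => //; split => //; rewrite leqNgt; apply/negP.
case/(card_lt_setI (Uplus_sub U v) (Uminus_sub U c)) => x.
rewrite !inE => /andP[/andP[xU Evx] /andP[_ Exc]].
have xC : x \in C.
  apply: (saturated_mem_after vC xU Evx) => c' c'C Evc'.
  have [->//|c'c] := eqVneq c' c.
  case/orP: (is_chainP C_chain c'C cC c'c) => [Ec'c|Ecc'].
    have c'S : c' \in S by rewrite inE c'C Evc'.
    by have := cmin _ c'S; rewrite leqNgt card_Uminus_lt ?(subsetP C_sub).
  exact: E_trans Exc Ecc'.
have xS : x \in S by rewrite inE xC Evx.
by have := cmin _ xS; rewrite leqNgt card_Uminus_lt.
Qed.

Lemma saturated_meets_Ud (R : realFieldType) (d : R) :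
  U != set0 -> #|U|%:R / 2 <= d -> exists2 v, v \in C & v \in Ud E U d.
Proof.
move=> U0 hd; have d0 : 0 <= d by apply: le_trans hd; rewrite divr_ge0 ?ler0n.
have [c0 c0C m0] := saturated_source U0.
pose P := [pred c | (c \in C) && ((m c)%:R <= d)].
have Pc0 : P c0 by rewrite inE c0C m0 cards0.
case: (arg_maxnP (fun c => m c) Pc0) => v /andP[vC vd] vmax.
exists v => //; rewrite inE (subsetP C_sub _ vC) vd /= leNgt; apply/negP => dlt.
have [|c cC [Evc hU]] := saturated_gap vC.
  by rewrite -card_gt0 -(ltr_nat R) (le_lt_trans d0 dlt).
have dc : d < (m c)%:R.
  rewrite ltNge; apply/negP => cd.
  have Pc : P c by rewrite inE cC cd.
  by have := vmax _ Pc; rewrite /= leqNgt card_Uminus_lt ?(subsetP C_sub).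
have : (#|U|%:R : R) < #|Uplus E U v|%:R + (m c)%:R.
  by apply: le_lt_trans (ltrD dlt dc); rewrite [leLHS]splitr lerD.
by rewrite -natrD ltr_nat ltnNge hU.
Qed.

End Chains.

Section Weights.
Variables (T : finType) (E : rel T) (R : realFieldType) (w : T -> R).
Variable U : {set T}.
Hypothesis w_ge0 : forall v, 0 <= w v.

Lemma opt_ge0 : 0 <= opt E w U.
Proof. exact: bigmax_ge_id. Qed.

Lemma weight_le_opt C : is_chain E C -> C \subset U -> weight w C <= opt E w U.
Proof. by move=> Cch CU; apply: le_bigmax_cond; rewrite Cch. Qed.

Lemma rU_le_opt v : rU E w U v <= opt E w U.
Proof.
by apply: bigmax_le opt_ge0 _ => C /and3P[Cch CU _]; apply: weight_le_opt.
Qed.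

Lemma rU_eq_opt C v :
  is_chain E C -> C \subset U -> v \in C -> weight w C = opt E w U ->
  rU E w U v = opt E w U.
Proof.
move=> Cch CU vC wC; apply/le_anti; rewrite rU_le_opt -wC.
by apply: le_bigmax_cond; rewrite Cch CU vC.
Qed.

Lemma exists_opt_chain :
  exists C, [/\ is_chain E C, C \subset U & weight w C = opt E w U].
Proof.
have P0 : is_chain E set0 && (set0 \subset U) by rewrite is_chain0 sub0set.
have [C /andP[Cch CU] optC] :=
  eq_bigmax _ (fun C => is_chain E C && (C \subset U)) (weight w) P0
    (fun C _ => sumr_ge0 _ (fun x _ => w_ge0 x)).
by exists C.
Qed.

(* An optimal chain of maximum cardinality is saturated: adding a vertex of
   nonnegative weight would keep it optimal. *)
Lemma exists_saturated_opt_chain :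
  exists C, [/\ is_chain E C, C \subset U, weight w C = opt E w U &
                saturated E U C].
Proof.
have [C0 [C0ch C0U wC0]] := exists_opt_chain.
pose P := [pred C | [&& is_chain E C, C \subset U & weight w C == opt E w U]].
have PC0 : P C0 by rewrite inE C0ch C0U wC0 eqxx.
case: (arg_maxnP (fun C : {set T} => #|C|) PC0).
move=> C /and3P[Cch CU /eqP wC] Cmax.
exists C; split => // u uU hu; apply/negPn/negP => uC.
have uCch := is_chain_setU1 Cch hu.
have uCU : u |: C \subset U by rewrite subUset sub1set uU.
have wuC : weight w (u |: C) = opt E w U.
  apply/le_anti; rewrite weight_le_opt //= -wC /weight big_setU1 //=.
  by rewrite lerDr.
have PuC : P (u |: C) by rewrite inE uCch uCU wuC eqxx.
by have := Cmax _ PuC; rewrite /= cardsU1 uC ltnn.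
Qed.

End Weights.

Theorem mainTheorem2 (T : finType) (E : rel T) (R : realFieldType)
  (w : T -> R) (U : {set T}) (d : R) :
  acyclic E -> transitive_rel E ->
  (forall v, 0 <= w v) ->
  U != set0 ->
  #|U|%:R / 2 <= d ->
  (exists2 v, v \in Ud E U d & rU E w U v = opt E w U) /\
  \big[Num.max/0]_(v in Ud E U d) rU E w U v = opt E w U.
Proof.
move=> E_acyclic E_trans w_ge0 U_neq0 hd.
have [C [Cch CU wC Csat]] := exists_saturated_opt_chain E U w_ge0.
have [v vC vUd] := saturated_meets_Ud E_acyclic E_trans Cch CU Csat U_neq0 hd.
have rUv := rU_eq_opt Cch CU vC wC.
split; first by exists v.
apply/le_anti/andP; split.
  by apply: bigmax_le => [|x _]; rewrite ?opt_ge0 ?rU_le_opt.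
by apply: bigmax_sup vUd _; rewrite rUv.
Qed.
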